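(* Let $B=B(x^{(0)};R)\subset\mathbb R^n$, let $x^{(1)},\dots,x^{(n+1)}\in B$ be the vertices of a nondegenerate simplex $S$ with basic Lagrange polynomials $\lambda_j(x)=\sum_{i=1}^n l_{ij}x_i+l_{n+1,j}$, and let $P:C(B)\to\Pi_1(\mathbb R^n)$ be the interpolation projector with nodes $x^{(j)}$. Then $$\|P\|_B=\max_{f_j=\pm1}\Big[R\Big(\sum_{i=1}^n\Big(\sum_{j=1}^{n+1}f_jl_{ij}\Big)^2\Big)^{1/2}+\Big|\sum_{j=1}^{n+1}f_j\lambda_j(x^{(0)})\Big|\Big],$$ where the maximum is over all $(f_1,\dots,f_{n+1})\in\{-1,1\}^{n+1}$. In particular, if the center of gravity of $S$ coincides with $x^{(0)}$, then $\|P\|_B=\max_{f_j=\pm1}\big[R(\sum_{i=1}^n(\sum_{j=1}^{n+1}f_jl_{ij})^2)^{1/2}+\frac1{n+1}|\sum_{j=1}^{n+1}f_j|\big]$.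
   Context: $B(x^{(0)};R)$ is the closed Euclidean ball of center $x^{(0)}$ and radius $R$. $C(\Omega)$ is the space of continuous real functions on $\Omega$ with the sup norm; $\Pi_1(\mathbb R^n)$ is the space of polynomials of degree $\le1$ in $n$ variables. The interpolation projector $P$ with nodes $x^{(j)}$ is defined by $Pf\in\Pi_1(\mathbb R^n)$, $Pf(x^{(j)})=f(x^{(j)})$, i.e. $Pf=\sum_j f(x^{(j)})\lambda_j$; $\|P\|_B$ is its operator norm on $C(B)$. The vertex matrix $A$ of $S$ has rows $(x^{(j)}_1,\dots,x^{(j)}_n,1)$, $A^{-1}=(l_{ij})$, and $\lambda_j(x)=\sum_i l_{ij}x_i+l_{n+1,j}$. *)

From HB Require Import structures.
From mathcomp Require Import all_boot all_order all_algebra.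
From mathcomp Require Import all_classical all_reals all_analysis.
Set Implicit Arguments. Unset Strict Implicit. Unset Printing Implicit Defensive.
Import Order.TTheory GRing.Theory Num.Theory.
Import numFieldNormedType.Exports.
Local Open Scope classical_set_scope.
Local Open Scope ring_scope.

Section Defs.
Variables (R : realType) (n : nat).

Definition enorm (v : 'rV[R]_n) : R := Num.sqrt (\sum_(i < n) (v 0 i) ^+ 2).

Definition cball (x0 : 'rV[R]_n) (r : R) : set 'rV[R]_n :=
  [set x | enorm (x - x0) <= r].

(* Vertex matrix: row j is (x^(j)_1, ..., x^(j)_n, 1). *)
Definition vertex_mx (xs : 'I_(n + 1) -> 'rV[R]_n) : 'M[R]_(n + 1) :=
  row_mx (\matrix_(j < n + 1) xs j) (const_mx 1).

(* l_{ij}, i = 1..n : coefficient of x_i in lambda_j *)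
Definition lcoef (xs : 'I_(n + 1) -> 'rV[R]_n) (i : 'I_n) (j : 'I_(n + 1)) : R :=
  invmx (vertex_mx xs) (lshift 1 i) j.

(* l_{n+1,j} : constant term of lambda_j *)
Definition lconst (xs : 'I_(n + 1) -> 'rV[R]_n) (j : 'I_(n + 1)) : R :=
  invmx (vertex_mx xs) (rshift n (0 : 'I_1)) j.

Definition lambda (xs : 'I_(n + 1) -> 'rV[R]_n) (j : 'I_(n + 1)) (x : 'rV[R]_n) : R :=
  \sum_(i < n) lcoef xs i j * x 0 i + lconst xs j.

Definition interp (xs : 'I_(n + 1) -> 'rV[R]_n) (f : 'rV[R]_n -> R) (x : 'rV[R]_n) : R :=
  \sum_(j < n + 1) f (xs j) * lambda xs j x.

Definition supnorm (B : set 'rV[R]_n) (g : 'rV[R]_n -> R) : R :=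
  sup [set `|g x| | x in B].

Definition interp_norm (B : set 'rV[R]_n) (xs : 'I_(n + 1) -> 'rV[R]_n) : R :=
  sup [set supnorm B (interp xs f) | f in
        [set f : 'rV[R]_n -> R | {within B, continuous f} /\
                                 forall x, B x -> `|f x| <= 1]].

End Defs.

(* The classical identity ||P||_B = max_B L, where
   L(y) = sum_j |lambda_j(y)| is the Lebesgue function, reduces the problem to
   maximising L over the ball:
   - |Pf| <= L pointwise when |f| <= 1 on the nodes, and L(y) = Pf(y) for a
     continuous f with |f| <= 1 taking the values sign(lambda_j(y)) at the
     nodes (a clamped affine function);
   - writing L(y) = sum_j s_j lambda_j(y) with signs s_j = +-1, each such signed
     combination is an affine function b_s + <a_s, y - x0>, whose maximal
     modulus on the ball is r |a_s| + |b_s| (Cauchy-Schwarz, attained at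
     x0 +- r a_s/|a_s|).
   Hence ||P||_B is the maximum over sign vectors of r |a_s| + |b_s|.  When x0
   is the centre of gravity, the barycentric property lambda_j(x0) = 1/(n+1)
   gives the second formula. *)
From HB Require Import structures.
From mathcomp Require Import all_boot all_order all_algebra.
From mathcomp Require Import all_classical all_reals all_analysis.
From mathcomp Require Import ring lra.
Set Implicit Arguments. Unset Strict Implicit. Unset Printing Implicit Defensive.
Import Order.TTheory GRing.Theory Num.Theory.
Import numFieldNormedType.Exports.
Local Open Scope classical_set_scope.
Local Open Scope ring_scope.

Section EuclideanNorm.
Variables (R : rcfType) (n : nat).

Definition l2norm (c : 'I_n -> R) : R := Num.sqrt (\sum_i c i ^+ 2).

Lemma l2normN (c : 'I_n -> R) : l2norm (fun i => - c i) = l2norm c.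
Proof. by rewrite /l2norm; under eq_bigr do rewrite sqrrN. Qed.

(* Cauchy-Schwarz inequality for finite sums, from
   0 <= sum_i (a_i V - v_i S)^2 = V (A V - S^2). *)
Lemma cauchy_schwarz (a v : 'I_n -> R) :
  \sum_i a i * v i <= l2norm a * l2norm v.
Proof.
rewrite /l2norm; set A := \sum_i a i ^+ 2; set V := \sum_i v i ^+ 2.
set S := \sum_i a i * v i.
have A0 : 0 <= A by apply: sumr_ge0 => i _; exact: sqr_ge0.
have V0 : 0 <= V by apply: sumr_ge0 => i _; exact: sqr_ge0.
suff SAV : S ^+ 2 <= A * V.
  rewrite -sqrtrM // (le_trans (ler_norm S)) //.
  by rewrite -sqrtr_sqr ler_sqrt ?mulr_ge0.
have [V_eq0|V_neq0] := eqVneq V 0.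
  have v0 i : v i = 0.
    apply/eqP; rewrite -sqrf_eq0; apply/eqP.
    by apply: (psumr_eq0P (P := xpredT) (F := fun i => v i ^+ 2)) => // j _;
      exact: sqr_ge0.
  by rewrite V_eq0 mulr0 /S big1 ?expr0n // => i _; rewrite v0 mulr0.
have Vp : 0 < V by rewrite lt_def V_neq0 V0.
have lagrange : \sum_i (a i * V - v i * S) ^+ 2 = V * (A * V - S ^+ 2).
  rewrite (eq_bigr (fun i =>
      a i ^+ 2 * V ^+ 2 - (a i * v i) * (2 * V * S) + v i ^+ 2 * S ^+ 2));
    last by move=> i _; ring.
  rewrite big_split sumrB /= -!mulr_suml -/A -/S -/V; ring.
have : 0 <= V * (A * V - S ^+ 2).
  by rewrite -lagrange; apply: sumr_ge0 => i _; exact: sqr_ge0.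
by rewrite pmulr_rge0 // subr_ge0.
Qed.

End EuclideanNorm.

Section AffineOnBall.
Variables (R : realType) (n : nat) (x0 : 'rV[R]_n) (r : R).

Lemma enorm_l2norm (v : 'rV[R]_n) : enorm v = l2norm (fun i => v 0 i).
Proof. by []. Qed.

Lemma cball_radius_ge0 (y : 'rV[R]_n) : cball x0 r y -> 0 <= r.
Proof. exact/le_trans/sqrtr_ge0. Qed.

Lemma ball_linear_le (c : 'I_n -> R) (y : 'rV[R]_n) : cball x0 r y ->
  \sum_i c i * (y 0 i - x0 0 i) <= r * l2norm c.
Proof.
move=> By; rewrite mulrC; apply: le_trans (cauchy_schwarz _ _) _.
apply: ler_wpM2l; first exact: sqrtr_ge0.
by move: By; rewrite /cball /= enorm_l2norm; under eq_fun do rewrite !mxE.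
Qed.

(* ... and the bound is attained at x0 + r c / |c|. *)
Lemma ball_linear_attained (c : 'I_n -> R) : 0 <= r ->
  exists2 y, cball x0 r y & \sum_i c i * (y 0 i - x0 0 i) = r * l2norm c.
Proof.
move=> r0; set k := r / l2norm c.
have k0 : 0 <= k by rewrite divr_ge0 ?sqrtr_ge0.
have sq_c : \sum_i c i ^+ 2 = l2norm c ^+ 2.
  by rewrite sqr_sqrtr //; apply: sumr_ge0 => i _; exact: sqr_ge0.
have kc : k * l2norm c <= r.
  by have [->|nz] := eqVneq (l2norm c) 0; rewrite ?mulr0 ?divfK.
exists (x0 + k *: \row_i c i).
  rewrite /cball /= enorm_l2norm /l2norm.
  under eq_bigr do rewrite !mxE addrAC subrr add0r exprMn.
  by rewrite -mulr_sumr sqrtrM ?sqr_ge0 // sqrtr_sqr ger0_norm.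
under eq_bigr do rewrite !mxE addrAC subrr add0r mulrCA -expr2.
rewrite -mulr_sumr sq_c /k.
have [->|nz] := eqVneq (l2norm c) 0; first by rewrite expr0n !mulr0.
by rewrite expr2 mulrA divfK.
Qed.

Lemma affine_ball_le (a : 'I_n -> R) (b : R) (y : 'rV[R]_n) : cball x0 r y ->
  `|b + \sum_i a i * (y 0 i - x0 0 i)| <= r * l2norm a + `|b|.
Proof.
move=> By; rewrite addrC; apply: le_trans (ler_normD _ _) _.
rewrite lerD2r ler_norml ball_linear_le // andbT lerNl.
rewrite -(l2normN a) -sumrN; under eq_bigr do rewrite -mulNr.
exact: ball_linear_le.
Qed.

Lemma affine_ball_attained (a : 'I_n -> R) (b : R) : 0 <= r ->
  exists2 y, cball x0 r y &
    `|b + \sum_i a i * (y 0 i - x0 0 i)| = r * l2norm a + `|b|.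
Proof.
move=> r0; have ra0 : 0 <= r * l2norm a by rewrite mulr_ge0 ?sqrtr_ge0.
have [b0|b0] := leP 0 b.
  have [y By Ey] := ball_linear_attained a r0.
  by exists y; rewrite // Ey ger0_norm ?addr_ge0 // (ger0_norm b0) addrC.
have [y By Ey] := ball_linear_attained (fun i => - a i) r0.
exists y => //; rewrite l2normN in Ey.
have -> : \sum_i a i * (y 0 i - x0 0 i) = - (r * l2norm a).
  by rewrite -Ey -sumrN; apply: eq_bigr => i _; rewrite mulNr opprK.
by rewrite (ltr0_norm b0) ler0_norm; [rewrite opprD opprK addrC | lra].
Qed.

End AffineOnBall.

Section Clamp.
Variable R : realType.

(* The piecewise linear retraction of R onto [-1, 1]. *)
Definition clamp (u : R) : R := (`|u + 1| - `|u - 1|) / 2.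

Lemma clamp_sign (b : bool) : clamp ((-1) ^+ b) = (-1) ^+ b.
Proof.
rewrite /clamp; case: b => /=; rewrite ?expr0 ?expr1; last first.
  by rewrite subrr normr0 subr0 ger0_norm //; field.
have -> : (-1 : R) + 1 = 0 by ring.
have -> : (-1 : R) - 1 = - 2 by ring.
by rewrite normr0 sub0r normrN ger0_norm //; field.
Qed.

Lemma clamp_le1 (u : R) : `|clamp u| <= 1.
Proof.
have := ler_dist_dist (u + 1) (u - 1).
have -> : u + 1 - (u - 1) = 2 by ring.
rewrite /clamp normrM normfV (ger0_norm (_ : 0 <= 2)) //.
set D := `| _ - _|; lra.
Qed.

Lemma continuous_clamp : continuous clamp.
Proof.
have shifted_norm (c : R) : continuous (fun v : R => `|v + c|).
  move=> v; have shift := continuousD (@cvg_id _ (nbhs v)) (@cst_continuous _ _ c v).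
  exact: continuous_comp shift (@norm_continuous _ R^o _).
move=> u; apply: continuousM (@cst_continuous _ _ (2^-1 : R) u).
exact: continuousB (shifted_norm 1 u) (shifted_norm (-1) u).
Qed.

End Clamp.

Section Lagrange.
Variables (R : realType) (n : nat) (xs : 'I_(n + 1) -> 'rV[R]_n).

Lemma continuous_lambda (j : 'I_(n + 1)) : continuous (lambda xs j).
Proof.
move=> y; apply: continuousD; last exact: cst_continuous.
apply: (continuous_big add_continuous) => i _ z.
apply: continuousM; [exact: cst_continuous | exact: coord_continuous].
Qed.

Lemma continuous_lambda_comb (w : 'I_(n + 1) -> R) :
  continuous (fun y => \sum_j w j * lambda xs j y).
Proof.
apply: (continuous_big add_continuous) => j _ y.
apply: continuousM; [exact: cst_continuous | exact: continuous_lambda].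
Qed.

Lemma lambda_comb (w : 'I_(n + 1) -> R) (y : 'rV[R]_n) :
  \sum_j w j * lambda xs j y =
  \sum_i (\sum_j w j * lcoef xs i j) * y 0 i + \sum_j w j * lconst xs j.
Proof.
rewrite /lambda; under eq_bigr do rewrite mulrDr mulr_sumr.
rewrite big_split /= exchange_big; congr (_ + _).
by apply: eq_bigr => i _; rewrite mulr_suml; apply: eq_bigr => j _; rewrite mulrA.
Qed.

Lemma lambda_comb_shift (w : 'I_(n + 1) -> R) (y z : 'rV[R]_n) :
  \sum_j w j * lambda xs j y = \sum_j w j * lambda xs j z
    + \sum_i (\sum_j w j * lcoef xs i j) * (y 0 i - z 0 i).
Proof.
under [X in _ + X]eq_bigr do rewrite mulrBr.
by rewrite sumrB !lambda_comb; ring.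
Qed.

Lemma lambda_affine_comb (mu : 'I_(n + 1) -> R) (ys : 'I_(n + 1) -> 'rV[R]_n)
    (j : 'I_(n + 1)) : \sum_k mu k = 1 ->
  lambda xs j (\sum_k mu k *: ys k) = \sum_k mu k * lambda xs j (ys k).
Proof.
move=> mu1; rewrite /lambda; under [RHS]eq_bigr do rewrite mulrDr mulr_sumr.
rewrite big_split /= -mulr_suml mu1 mul1r exchange_big /=; congr (_ + _).
apply: eq_bigr => i _; rewrite summxE mulr_sumr; apply: eq_bigr => k _.
by rewrite mxE mulrCA.
Qed.

Hypothesis hnd : vertex_mx xs \in unitmx.

(* lambda_j is the Lagrange basis: lambda_j(x^(k)) = delta_jk, which is the
   entry (k, j) of the identity vertex_mx * invmx vertex_mx = 1. *)
Lemma lambda_nodes (j k : 'I_(n + 1)) : lambda xs j (xs k) = (k == j)%:R.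
Proof.
have := congr1 (fun M : 'M[R]_(n + 1) => M k j) (mulmxV hnd).
rewrite mxE !mxE big_split_ord /= big_ord1 => <-.
rewrite /lambda /lcoef /lconst /vertex_mx; congr (_ + _).
  by apply: eq_bigr => i _; rewrite row_mxEl mxE mulrC.
by rewrite row_mxEr mxE mul1r.
Qed.

Lemma lambda_comb_node (w : 'I_(n + 1) -> R) (k : 'I_(n + 1)) :
  \sum_j w j * lambda xs j (xs k) = w k.
Proof.
under eq_bigr do rewrite lambda_nodes.
rewrite (bigD1 k) //= eqxx mulr1 big1 ?addr0 // => j /negbTE.
by rewrite eq_sym => ->; rewrite mulr0.
Qed.

Lemma lambda_barycentric (mu : 'I_(n + 1) -> R) (j : 'I_(n + 1)) :
  \sum_k mu k = 1 -> lambda xs j (\sum_k mu k *: xs k) = mu j.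
Proof.
move=> mu1; rewrite lambda_affine_comb //; under eq_bigr do rewrite lambda_nodes.
by rewrite (bigD1 j) //= eqxx mulr1 big1 ?addr0 // => k /negbTE ->; rewrite mulr0.
Qed.

Lemma lambda_centroid (j : 'I_(n + 1)) :
  lambda xs j ((n + 1)%:R^-1 *: \sum_k xs k) = (n + 1)%:R^-1.
Proof.
rewrite scaler_sumr lambda_barycentric // sumr_const card_ord.
by rewrite -[_ *+ _]mulr_natl mulfV // pnatr_eq0 addn1.
Qed.

End Lagrange.

(* The first node index; 'I_(n + 1) is not syntactically of the form 'I_m.+1. *)
Definition node0 (n : nat) : 'I_(n + 1) := Ordinal (ltn_addl n (ltnSn 0)).

Section LebesgueFunction.
Variables (R : realType) (n : nat) (xs : 'I_(n + 1) -> 'rV[R]_n).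

Definition lebesgue (y : 'rV[R]_n) : R := \sum_j `|lambda xs j y|.

Lemma lebesgue_ge0 (y : 'rV[R]_n) : 0 <= lebesgue y.
Proof. by apply: sumr_ge0 => j _; exact: normr_ge0. Qed.

Lemma lebesgue_signs (y : 'rV[R]_n) :
  lebesgue y = \sum_j (-1) ^+ (lambda xs j y < 0)%R * lambda xs j y.
Proof.
rewrite /lebesgue; apply: eq_bigr => j _.
by rewrite -{3}(mulr_sign_norm (lambda xs j y)) mulrA -expr2 sqrr_sign mul1r.
Qed.

Lemma comb_le_lebesgue (w : 'I_(n + 1) -> R) (y : 'rV[R]_n) :
  (forall j, `|w j| <= 1) -> `|\sum_j w j * lambda xs j y| <= lebesgue y.
Proof.
move=> w1; apply: le_trans (ler_norm_sum _ _ _) _; apply: ler_sum => j _.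
by rewrite normrM ler_piMl.
Qed.

End LebesgueFunction.

Section InterpolationNorm.
Variables (R : realType) (n : nat) (B : set 'rV[R]_n).
Variables (xs : 'I_(n + 1) -> 'rV[R]_n) (M : R).
Hypothesis nodes_in_B : forall j, B (xs j).
Hypothesis lebesgue_le : forall y, B y -> lebesgue xs y <= M.

Lemma supnorm_interp_le (f : 'rV[R]_n -> R) :
  (forall x, B x -> `|f x| <= 1) -> supnorm B (interp xs f) <= M.
Proof.
move=> f1; apply: ge_sup.
  by exists `|interp xs f (xs (node0 n))|; exists (xs (node0 n)).
move=> _ [y By <-]; apply: le_trans (lebesgue_le By).
by apply: comb_le_lebesgue => j; exact: f1.
Qed.

Lemma interp_norm_le : interp_norm B xs <= M.
Proof.
apply: ge_sup; last by move=> _ [f [_ f1] <-]; exact: supnorm_interp_le.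
exists (supnorm B (interp xs (fun=> 0))), (fun=> 0) => //; split.
  exact: continuous_subspaceT (@cst_continuous _ _ (0 : R)).
by move=> x _; rewrite normr0.
Qed.

Hypothesis hnd : vertex_mx xs \in unitmx.

(* Conversely L(y) <= ||P||_B: L(y) = Pf(y) for the continuous function
   f = clamp (sum_j s_j lambda_j), s_j the sign of lambda_j(y), which takes
   the value s_j at the node x^(j) and satisfies |f| <= 1. *)
Lemma lebesgue_le_interp_norm (y : 'rV[R]_n) :
  B y -> lebesgue xs y <= interp_norm B xs.
Proof.
move=> By; pose sgn j : R := (-1) ^+ (lambda xs j y < 0)%R.
pose f z := clamp (\sum_j sgn j * lambda xs j z).
have f1 x : `|f x| <= 1 by exact: clamp_le1.
have f_cont : continuous f.
  move=> z; apply: continuous_comp (@continuous_clamp R _).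
  exact: continuous_lambda_comb.
have Pf_y : interp xs f y = lebesgue xs y.
  rewrite lebesgue_signs /interp; apply: eq_bigr => k _.
  by rewrite /f lambda_comb_node // clamp_sign.
have Pf_bounded : has_ubound [set `|interp xs f x| | x in B].
  exists M => _ [z Bz <-]; apply: le_trans (lebesgue_le Bz).
  exact: comb_le_lebesgue.
apply: le_trans (ler_norm _) _; rewrite -Pf_y.
apply: le_trans (ub_le_sup Pf_bounded _) _; first by exists y.
apply: ub_le_sup; last by exists f => //; split => //; exact: continuous_subspaceT.
by exists M => _ [g [_ g1] <-]; exact: supnorm_interp_le.
Qed.

End InterpolationNorm.

Section SimplexInBall.
Variables (R : realType) (n : nat) (x0 : 'rV[R]_n) (r : R).
Variable xs : 'I_(n + 1) -> 'rV[R]_n.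

(* Maximal modulus on the ball of the signed combination sum_j s_j lambda_j,
   an affine function with linear part (sum_j s_j l_ij)_i and value
   sum_j s_j lambda_j(x0) at the centre. *)
Definition sign_value (s : {ffun 'I_(n + 1) -> bool}) : R :=
  r * l2norm (fun i => \sum_j (-1) ^+ s j * lcoef xs i j)
  + `|\sum_j (-1) ^+ s j * lambda xs j x0|.

(* L is bounded on the ball by the largest sign_value: write L(y) as the
   combination with the signs of the lambda_j(y). *)
Lemma lebesgue_ball_le (y : 'rV[R]_n) : cball x0 r y ->
  lebesgue xs y <= \big[Num.max/0]_s sign_value s.
Proof.
move=> By; pose s := [ffun j => lambda xs j y < 0].
apply: le_trans (le_bigmax _ _ s); rewrite lebesgue_signs.
rewrite (eq_bigr (fun j => (-1) ^+ s j * lambda xs j y)) => [|j _];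
  last by rewrite ffunE.
rewrite (lambda_comb_shift _ _ _ x0); apply: le_trans (ler_norm _) _.
exact: affine_ball_le.
Qed.

(* Each sign_value is reached by L at some point of the ball, since a signed
   combination is at most L in modulus. *)
Lemma sign_value_attained (s : {ffun 'I_(n + 1) -> bool}) : 0 <= r ->
  exists2 y, cball x0 r y & sign_value s <= lebesgue xs y.
Proof.
move=> r0; have [y By Ey] := affine_ball_attained x0
  (fun i => \sum_j (-1) ^+ s j * lcoef xs i j)
  (\sum_j (-1) ^+ s j * lambda xs j x0) r0.
exists y => //; rewrite /sign_value -Ey -lambda_comb_shift.
by apply: comb_le_lebesgue => j; rewrite normr_sign.
Qed.

End SimplexInBall.

Theorem theorem11p1 (R : realType) (n : nat) (x0 : 'rV[R]_n) (r : R)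
    (xs : 'I_(n + 1) -> 'rV[R]_n)
    (hxs : forall j, cball x0 r (xs j))
    (hnd : vertex_mx xs \in unitmx) :
  interp_norm (cball x0 r) xs =
    \big[Num.max/0]_(s : {ffun 'I_(n + 1) -> bool})
      (r * Num.sqrt (\sum_(i < n)
             (\sum_(j < n + 1) (-1) ^+ s j * lcoef xs i j) ^+ 2)
       + `| \sum_(j < n + 1) (-1) ^+ s j * lambda xs j x0 |)
  /\
  ((n + 1)%:R^-1 *: \sum_(j < n + 1) xs j = x0 ->
   interp_norm (cball x0 r) xs =
    \big[Num.max/0]_(s : {ffun 'I_(n + 1) -> bool})
      (r * Num.sqrt (\sum_(i < n)
             (\sum_(j < n + 1) (-1) ^+ s j * lcoef xs i j) ^+ 2)
       + (n + 1)%:R^-1 * `| \sum_(j < n + 1) (-1) ^+ s j |)).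
Proof.
have r0 : 0 <= r := cball_radius_ge0 (hxs (node0 n)).
have L_le := @lebesgue_ball_le _ _ x0 r xs.
have norm_eq : interp_norm (cball x0 r) xs = \big[Num.max/0]_s sign_value x0 r xs s.
  apply: le_anti; rewrite (interp_norm_le hxs L_le) /=.
  apply: bigmax_le => [|s _].
    apply: le_trans (lebesgue_le_interp_norm hxs L_le hnd (hxs (node0 n))).
    exact: lebesgue_ge0.
  have [y By sy] := sign_value_attained x0 xs s r0.
  exact: le_trans sy (lebesgue_le_interp_norm hxs L_le hnd By).
split => [|centroid]; first exact: norm_eq.
rewrite norm_eq; apply: eq_bigr => s _; congr (_ + _).
rewrite -centroid; under eq_bigr do rewrite (lambda_centroid hnd).
by rewrite -mulr_suml normrM mulrC ger0_norm // invr_ge0 ler0n.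
Qed.
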